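(* For both \textsc{OneMinMax} and \textsc{LOTZ}, the crowding distance contribution $\mathrm{CDC}(x,P)$ is diversity-favouring on $\{0,1\}^n\setminus\{0^n,1^n\}$.
   Context: Search space $\{0,1\}^n$; objectives maximised. $\textsc{OneMinMax}(x)=(\sum_ix_i,\,n-\sum_ix_i)$; $\textsc{LOTZ}(x)=(\mathrm{LO}(x),\mathrm{TZ}(x))$ with $\mathrm{LO}$ the number of leading ones and $\mathrm{TZ}$ the number of trailing zeros. Dominance: $y$ dominates $x$ if $f_i(y)\ge f_i(x)$ for all $i$, strictly for some $i$. Pareto set $X^*$, front $F^*=f(X^* )$. Populations $P$ are sets of mutually non-dominated points with distinct objective vectors. CDC: every point of $P$ starts with distance 0; for each objective $m$, sort $P$ ascending by $f_m$ as $P[1],\dots,P[l]$, set the distance of $P[1]$ and $P[l]$ to $\infty$, and for $2\le i\le l-1$ add $(f_m(P[i+1])-f_m(P[i-1]))/(f_m^{\max}-f_m^{\min})$, where $f_m^{\max},f_m^{\min}$ are the maximum and minimum values of objective $m$. Good: w.r.t. $P$, $x\in P\cap X^*$ is good if some Hamming neighbour $y$ of $x$ satisfies $y\in X^*$ and $f(y)\notin f(P)$; otherwise bad. A measure is diversity-favouring on $S$ (w.r.t. $f$) if for every population $P$ and all $x,y\in P\cap X^*\cap S$ with $x$ bad and $y$ good, $\mathrm{score}(x,P)<\mathrm{score}(y,P)$. *)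

From mathcomp Require Import all_boot all_order all_algebra.
Set Implicit Arguments. Unset Strict Implicit. Unset Printing Implicit Defensive.
Import Order.TTheory GRing.Theory Num.Theory.

Definition bits (n : nat) := {ffun 'I_n -> bool}.

Definition zeros n : bits n := [ffun => false].
Definition onesv n : bits n := [ffun => true].

Definition bitseq_of n (x : bits n) : seq bool := [seq x i | i <- enum 'I_n].

Definition nones n (x : bits n) : nat := \sum_(i < n) (x i : nat).

Definition OneMinMax n (x : bits n) : nat * nat := (nones x, n - nones x).

Definition LO n (x : bits n) : nat := find (fun b => ~~ b) (bitseq_of x).
Definition TZ n (x : bits n) : nat := find id (rev (bitseq_of x)).

Definition LOTZ n (x : bits n) : nat * nat := (LO x, TZ x).

Definition obj (T : Type) (f : T -> nat * nat) (m : 'I_2) (x : T) : nat :=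
  if val m == 0 then (f x).1 else (f x).2.

Definition dominates (T : Type) (f : T -> nat * nat) (y x : T) : bool :=
  [&& (f x).1 <= (f y).1, (f x).2 <= (f y).2 &
      ((f x).1 < (f y).1) || ((f x).2 < (f y).2)].

Definition pareto n (f : bits n -> nat * nat) (x : bits n) : bool :=
  [forall y, ~~ dominates f y x].

Definition population n (f : bits n -> nat * nat) (P : {set bits n}) : Prop :=
  (forall x y, x \in P -> y \in P -> ~~ dominates f x y) /\
  (forall x y, x \in P -> y \in P -> f x = f y -> x = y).

Definition hamming_neighbour n (x y : bits n) : bool :=
  #|[set i | x i != y i]| == 1.

Definition good n (f : bits n -> nat * nat) (P : {set bits n}) (x : bits n) : bool :=
  [&& x \in P, pareto f x &
   [exists y, [&& hamming_neighbour x y, pareto f y &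
                  ~~ [exists z in P, f z == f y]]]].

Definition bad n (f : bits n -> nat * nat) (P : {set bits n}) (x : bits n) : bool :=
  [&& x \in P, pareto f x & ~~ good f P x].

(* extended nonnegative reals for distances: finite rational or infinity *)
Inductive ext := Fin of rat | Inf.

Definition ext_lt (a b : ext) : bool :=
  match a, b with
  | Fin a, Fin b => (a < b)%R
  | Fin _, Inf => true
  | Inf, _ => false
  end.

Definition fmax n (f : bits n -> nat * nat) (m : 'I_2) : nat :=
  \max_(x : bits n) obj f m x.
Definition fmin n (f : bits n -> nat * nat) (m : 'I_2) : nat :=
  \big[minn/fmax f m]_(x : bits n) obj f m x.

Definition sortedP n (f : bits n -> nat * nat) (m : 'I_2) (P : {set bits n}) :=
  sort (fun a b => obj f m a <= obj f m b) (enum P).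

Definition boundary n (f : bits n -> nat * nat) (m : 'I_2) (P : {set bits n})
  (x : bits n) : bool :=
  let s := sortedP f m P in
  (index x s == 0) || (index x s == (size s).-1).

Definition contrib n (f : bits n -> nat * nat) (m : 'I_2) (P : {set bits n})
  (x : bits n) : rat :=
  let s := sortedP f m P in
  let i := index x s in
  (((obj f m (nth x s i.+1))%:R - (obj f m (nth x s i.-1))%:R)
     / ((fmax f m)%:R - (fmin f m)%:R))%R.

Definition CDC n (f : bits n -> nat * nat) (P : {set bits n}) (x : bits n) : ext :=
  if [exists m : 'I_2, boundary f m P x] then Inf
  else Fin (\sum_(m < 2) contrib f m P x)%R.

Definition diversity_favouring n (f : bits n -> nat * nat)
  (score : bits n -> {set bits n} -> ext) (S : pred (bits n)) : Prop :=
  forall P : {set bits n}, population f P ->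
  forall x y : bits n,
    x \in P -> pareto f x -> S x ->
    y \in P -> pareto f y -> S y ->
    bad f P x -> good f P y -> ext_lt (score x P) (score y P).

Definition not_const n : pred (bits n) :=
  fun x => (x != zeros n) && (x != onesv n).

(* On OneMinMax and LOTZ the Pareto front is the antidiagonal {(k, n - k)}, and
   Hamming neighbours on the front have first objectives k - 1 or k + 1.  If a
   non-constant x is bad, both front values next to f(x) are taken in P, so in
   each objective the sorted neighbours of x sit at distance exactly 1 on either
   side and CDC(x) = sum_m 2 / (f_m^max - f_m^min).  If y is good, a front value
   next to f(y) is free; since a point of P there must lie on the front (it is not
   dominated by y), in that objective y has a gap of at least 3, and in the other
   one at least 2, unless y is a boundary point and gets distance infinity. *)

From Pilot Require Import Defs.
From mathcomp Require Import all_boot all_order all_algebra.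
From mathcomp Require Import zify.
Import Order.TTheory GRing.Theory Num.Theory.

Set Implicit Arguments.
Unset Strict Implicit.
Unset Printing Implicit Defensive.

Section ObjectiveRange.
Variables (n : nat) (f : bits n -> nat * nat) (m : 'I_2).

Lemma fmin_le_obj x : fmin f m <= obj f m x.
Proof.
rewrite /fmin; elim: (index_enum _) (mem_index_enum x) => // a r IH.
rewrite inE big_cons => /predU1P[<- | /IH]; first exact: geq_minl.
exact: leq_trans (geq_minr _ _).
Qed.

Lemma obj_le_fmax x : obj f m x <= fmax f m.
Proof. exact: (leq_bigmax (F := obj f m)). Qed.

Definition obj_range : rat := ((fmax f m)%:R - (fmin f m)%:R)%R.

Lemma obj_range_gt0 a b : obj f m a < obj f m b -> (0 < obj_range)%R.
Proof.
move=> lt_ab; rewrite subr_gt0 ltr_nat.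
exact: leq_ltn_trans (fmin_le_obj a) (leq_trans lt_ab (obj_le_fmax b)).
Qed.

End ObjectiveRange.

Section SortedPopulation.
Variables (n : nat) (f : bits n -> nat * nat) (m : 'I_2) (P : {set bits n}).
Hypothesis obj_inj : {in P &, injective (obj f m)}.
Implicit Types x z a b : bits n.
Local Notation g := (obj f m).
Local Notation s := (Defs.sortedP f m P).

Lemma mem_sortedP x : (x \in s) = (x \in P).
Proof. by rewrite mem_sort mem_enum. Qed.

Lemma uniq_sortedP : uniq s.
Proof. by rewrite sort_uniq enum_uniq. Qed.

Lemma index_sortedP_size x : x \in P -> index x s < size s.
Proof. by rewrite index_mem mem_sortedP. Qed.

Lemma sortedP_leq_nth x0 i j : i <= j -> j < size s ->
  g (nth x0 s i) <= g (nth x0 s j).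
Proof.
move=> le_ij lt_js.
have le_trans : transitive (fun a b => g a <= g b) by move=> b a c; exact: leq_trans.
have sorted_s : sorted (fun a b => g a <= g b) s by apply: sort_sorted => a b; exact: leq_total.
apply: (sorted_leq_nth le_trans (fun a => leqnn (g a)) x0 sorted_s) => //.
by rewrite inE (leq_ltn_trans le_ij lt_js).
Qed.

Lemma sortedP_ltn_nth x0 i j : i < j -> j < size s ->
  g (nth x0 s i) < g (nth x0 s j).
Proof.
move=> lt_ij lt_js; have lt_is := ltn_trans lt_ij lt_js.
rewrite ltn_neqAle sortedP_leq_nth ?(ltnW lt_ij) // andbT.
apply: contraTneq lt_ij => /obj_inj eq_ij.
have /eqP : nth x0 s i = nth x0 s j by apply: eq_ij; rewrite -mem_sortedP mem_nth.
by rewrite nth_uniq ?uniq_sortedP // => /eqP ->; rewrite ltnn.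
Qed.

Lemma sortedP_index_ltn x z : x \in P -> z \in P ->
  (g z < g x) = (index z s < index x s).
Proof.
move=> /index_sortedP_size xs /index_sortedP_size zs.
case: (ltnP (index z s) (index x s)) => [lt_zx | le_xz].
  by have := sortedP_ltn_nth x lt_zx xs; rewrite !nth_index // -index_mem.
by apply/negbTE; rewrite -leqNgt; have := sortedP_leq_nth x le_xz zs; rewrite !nth_index // -index_mem.
Qed.

Definition sorted_prev x := nth x s (index x s).-1.
Definition sorted_next x := nth x s (index x s).+1.

Lemma contribE x : contrib f m P x =
  (((g (sorted_next x))%:R - (g (sorted_prev x))%:R) / obj_range f m)%R.
Proof. by []. Qed.

Section Interior.
Variable x : bits n.
Hypotheses (xP : x \in P) (x_inner : ~~ boundary f m P x).

Lemma interior_index : 0 < index x s /\ (index x s).+1 < size s.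
Proof.
move: x_inner; rewrite /boundary negb_or => /andP[/eqP ne0 /eqP nelast].
have := index_sortedP_size xP; lia.
Qed.

Let prev_lt_size : (index x s).-1 < size s.
Proof. exact: leq_ltn_trans (leq_pred _) (index_sortedP_size xP). Qed.

Let next_lt_size : (index x s).+1 < size s.
Proof. exact: interior_index.2. Qed.

Lemma sorted_prev_in : sorted_prev x \in P.
Proof. by rewrite -mem_sortedP mem_nth. Qed.

Lemma sorted_next_in : sorted_next x \in P.
Proof. by rewrite -mem_sortedP mem_nth. Qed.

Lemma index_sorted_prev : index (sorted_prev x) s = (index x s).-1.
Proof. by rewrite index_uniq ?uniq_sortedP. Qed.

Lemma index_sorted_next : index (sorted_next x) s = (index x s).+1.
Proof. by rewrite index_uniq ?uniq_sortedP. Qed.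

Lemma obj_sorted_prev_lt : g (sorted_prev x) < g x.
Proof.
rewrite sortedP_index_ltn ?sorted_prev_in // index_sorted_prev.
by have := interior_index; lia.
Qed.

Lemma obj_sorted_next_gt : g x < g (sorted_next x).
Proof. by rewrite sortedP_index_ltn ?sorted_next_in // index_sorted_next. Qed.

Lemma obj_le_sorted_prev z : z \in P -> g z < g x -> g z <= g (sorted_prev x).
Proof.
move=> zP; rewrite sortedP_index_ltn // => lt_zx.
have zs := index_sortedP_size zP.
rewrite -{1}(nth_index x (_ : z \in s)) ?mem_sortedP //.
by apply: sortedP_leq_nth; have := interior_index; lia.
Qed.

End Interior.

Lemma obj_sorted_next_le x z : x \in P -> z \in P -> g x < g z -> g (sorted_next x) <= g z.
Proof.
move=> xP zP; rewrite sortedP_index_ltn // => lt_xz.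
have zs := index_sortedP_size zP.
by rewrite -[in X in _ <= X](nth_index x (_ : z \in s)) ?mem_sortedP //; apply: sortedP_leq_nth.
Qed.

Lemma not_boundary a x b : a \in P -> x \in P -> b \in P ->
  g a < g x -> g x < g b -> ~~ boundary f m P x.
Proof.
move=> aP xP bP; rewrite !sortedP_index_ltn // => lt_ax lt_xb.
have := index_sortedP_size bP; rewrite /boundary; lia.
Qed.

Definition occupied_below x := exists2 a, a \in P & (g a).+1 = g x.
Definition occupied_above x := exists2 b, b \in P & g b = (g x).+1.

Lemma contrib_occupied x : x \in P -> occupied_below x -> occupied_above x ->
  ~~ boundary f m P x /\ contrib f m P x = (2 / obj_range f m)%R.
Proof.
move=> xP [a aP ax] [b bP bx].
have x_inner : ~~ boundary f m P x by apply: (not_boundary aP xP bP); lia.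
have prev_eq : g (sorted_prev x) = g a.
  by have := obj_le_sorted_prev xP x_inner aP; have := obj_sorted_prev_lt xP x_inner; lia.
have next_eq : g (sorted_next x) = (g a + 2)%N.
  by have := obj_sorted_next_le xP bP; have := obj_sorted_next_gt xP x_inner; lia.
split=> //; rewrite contribE prev_eq next_eq.
by rewrite natrD addrAC subrr add0r.
Qed.

Lemma contrib_ge k x : x \in P -> ~~ boundary f m P x ->
  g (sorted_prev x) + k <= g (sorted_next x) ->
  (k%:R / obj_range f m <= contrib f m P x)%R.
Proof.
move=> xP x_inner gap.
have lt_prev_next := ltn_trans (obj_sorted_prev_lt xP x_inner) (obj_sorted_next_gt xP x_inner).
rewrite contribE ler_pM2r ?invr_gt0 ?(obj_range_gt0 lt_prev_next) //.
by rewrite lerBrDr -natrD ler_nat addnC.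
Qed.

Lemma contrib_interior_ge x : x \in P -> ~~ boundary f m P x ->
  (2 / obj_range f m <= contrib f m P x)%R.
Proof.
move=> xP x_inner; apply: contrib_ge => //.
by have := obj_sorted_prev_lt xP x_inner; have := obj_sorted_next_gt xP x_inner; lia.
Qed.

Lemma contrib_unoccupied_gt x : x \in P -> ~~ boundary f m P x ->
  ~ occupied_below x -> (2 / obj_range f m < contrib f m P x)%R.
Proof.
move=> xP x_inner free.
have prev_gap : (g (sorted_prev x)).+1 != g x.
  by apply: contra_notN free => /eqP; exists (sorted_prev x); rewrite ?sorted_prev_in.
have lt_prev_next := ltn_trans (obj_sorted_prev_lt xP x_inner) (obj_sorted_next_gt xP x_inner).
apply: lt_le_trans (contrib_ge (k := 3) xP x_inner _); last first.
  by have := obj_sorted_prev_lt xP x_inner; have := obj_sorted_next_gt xP x_inner; lia.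
by rewrite ltr_pM2r ?invr_gt0 ?(obj_range_gt0 lt_prev_next) // ltr_nat.
Qed.

End SortedPopulation.

Section CrowdingDistance.
Variables (n : nat) (f : bits n -> nat * nat) (P : {set bits n}).
Hypothesis popP : population f P.
Implicit Types x y a b : bits n.

Lemma population_obj_inj m : {in P &, injective (obj f m)}.
Proof.
move=> a b aP bP eq_ab; apply: popP.2 => //.
have := popP.1 a b aP bP; have := popP.1 b a bP aP.
move: eq_ab; rewrite /obj /dominates; case: ifP => _ eq_ab nd_ba nd_ab;
  apply: injective_projections; lia.
Qed.

Lemma CDC_lt x y : x \in P -> y \in P ->
  (forall m, occupied_below f m P x /\ occupied_above f m P x) ->
  (exists m, ~ occupied_below f m P y) ->
  ext_lt (CDC f P x) (CDC f P y).
Proof.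
move=> xP yP x_tight [m0 y_free].
have inj m := @population_obj_inj m.
have x_contrib m := contrib_occupied (inj m) xP (x_tight m).1 (x_tight m).2.
rewrite /CDC; have -> : [exists m, boundary f m P x] = false.
  by apply/existsPn => m; exact: (x_contrib m).1.
case: ifP => // y_boundary /=.
have y_inner m : ~~ boundary f m P y by apply: contraFN y_boundary => ?; apply/existsP; exists m.
rewrite (bigD1 m0) //= [in X in (_ < X)%R](bigD1 m0) //= (x_contrib m0).2.
apply: ltr_leD; first by rewrite (contrib_unoccupied_gt (inj m0) yP (y_inner m0) y_free).
apply: ler_sum => m _; rewrite (x_contrib m).2.
by rewrite (contrib_interior_ge (inj m) yP (y_inner m)).
Qed.

End CrowdingDistance.

Section AntidiagonalFront.
Variables (n : nat) (f : bits n -> nat * nat).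
Implicit Types x y z a : bits n.
Hypothesis obj_sum_le : forall a, (f a).1 + (f a).2 <= n.
Hypothesis pareto_obj_sum : forall x, pareto f x -> (f x).1 + (f x).2 = n.
Hypothesis pareto_neighbour_step : forall y z,
  pareto f y -> pareto f z -> hamming_neighbour y z ->
  (f z).1.+1 = (f y).1 \/ (f z).1 = (f y).1.+1.
Hypothesis pareto_neighbour_down : forall x, pareto f x -> x != zeros n ->
  exists z, [/\ hamming_neighbour x z, pareto f z & (f z).1.+1 = (f x).1].
Hypothesis pareto_neighbour_up : forall x, pareto f x -> x != onesv n ->
  exists z, [/\ hamming_neighbour x z, pareto f z & (f z).1 = (f x).1.+1].

Lemma bad_occupied (P : {set bits n}) x (m : 'I_2) : x \in P -> not_const x -> bad f P x ->
  occupied_below f m P x /\ occupied_above f m P x.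
Proof.
move=> xP /andP[nz no] /and3P[_ px not_good].
have covered z : hamming_neighbour x z -> pareto f z -> [exists a in P, f a == f z].
  move=> xz pz; apply: contraNT not_good => free.
  by rewrite /good xP px; apply/existsP; exists z; rewrite xz pz.
have [z1 [xz1 pz1 z1x]] := pareto_neighbour_down px nz.
have [z2 [xz2 pz2 z2x]] := pareto_neighbour_up px no.
have /exists_inP[a1 a1P /eqP fa1] := covered z1 xz1 pz1.
have /exists_inP[a2 a2P /eqP fa2] := covered z2 xz2 pz2.
have sum_x := pareto_obj_sum px.
have sum1 := pareto_obj_sum pz1; have sum2 := pareto_obj_sum pz2.
rewrite -fa1 in z1x sum1; rewrite -fa2 in z2x sum2.
rewrite /occupied_below /occupied_above /obj; case: ifP => _.
- by split; [exists a1 | exists a2] => //; lia.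
- by split; [exists a2 | exists a1] => //; lia.
Qed.

Lemma good_unoccupied (P : {set bits n}) y : population f P -> good f P y ->
  exists m, ~ occupied_below f m P y.
Proof.
move=> [non_dom _] /and3P[yP py /existsP[z /and3P[yz pz /exists_inPn fresh]]].
have sum_y := pareto_obj_sum py; have sum_z := pareto_obj_sum pz.
have fresh_z a : a \in P -> f a <> f z by move=> aP /eqP; apply/negP: (fresh a aP).
(* A point of P one step below [y] in the objective where [z] lies below [y]
   is not dominated by [y], which forces it onto the front at [f z]. *)
case: (pareto_neighbour_step py pz yz) => step; [exists ord0 | exists ord_max];
  move=> [a aP below]; apply: (fresh_z a aP);
  have := non_dom y a yP aP; have := obj_sum_le a; move: below;
  rewrite /obj /dominates /= => *; apply: injective_projections; lia.
Qed.

Theorem CDC_diversity_favouring :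
  diversity_favouring f (fun x P => CDC f P x) (@not_const n).
Proof.
move=> P popP x y xP _ x_nc yP _ _ x_bad y_good.
apply: (CDC_lt popP xP yP _ (good_unoccupied popP y_good)) => m.
exact: bad_occupied.
Qed.

End AntidiagonalFront.

Section BitStrings.
Variable n : nat.
Implicit Types x z : bits n.

Definition flip x (p : 'I_n) : bits n := [ffun i => x i (+) (i == p)].

Lemma nones_le x : nones x <= n.
Proof.
rewrite -[X in _ <= X]card_ord -sum1_card.
by apply: leq_sum => i _; case: (x i).
Qed.

Lemma hamming_neighbour_flip x p : hamming_neighbour x (flip x p).
Proof.
apply/cards1P; exists p; apply/setP => i.
by rewrite !inE ffunE; case: (x i); case: (i == p).
Qed.

Lemma hamming_neighbourE x z : hamming_neighbour x z -> exists p, z = flip x p.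
Proof.
move/cards1P => [p /setP flips]; exists p; apply/ffunP => i.
by move: (flips i); rewrite !inE ffunE => <-; case: (x i); case: (z i).
Qed.

Lemma nones_flip x p : nones (flip x p) + x p = nones x + ~~ x p.
Proof.
rewrite /nones (bigD1 p) //= [in RHS](bigD1 p) //= ffunE eqxx addbT.
rewrite (eq_bigr (fun i => nat_of_bool (x i))) => [|i /negbTE ip]; last by rewrite ffunE ip addbF.
by case: (x p) => /=; lia.
Qed.

Lemma hamming_neighbour_nones x z : hamming_neighbour x z ->
  (nones z).+1 = nones x \/ nones z = (nones x).+1.
Proof.
move=> /hamming_neighbourE[p ->]; have := nones_flip x p.
by case: (x p) => /=; lia.
Qed.

Lemma one_bit x : x != zeros n -> exists p, x p.
Proof.
move=> nz; apply/existsP; apply: contraNT nz => /existsPn all0.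
by apply/eqP/ffunP => i; rewrite ffunE; apply/negbTE.
Qed.

Lemma zero_bit x : x != onesv n -> exists p, ~~ x p.
Proof.
move=> no; apply/existsP; apply: contraNT no => /existsPn all1.
by apply/eqP/ffunP => i; rewrite ffunE; apply/negPn.
Qed.

Lemma size_bitseq_of x : size (bitseq_of x) = n.
Proof. by rewrite size_map size_enum_ord. Qed.

Lemma nth_bitseq_of x (i : 'I_n) : nth false (bitseq_of x) i = x i.
Proof. by rewrite (nth_map i) ?size_enum_ord // nth_ord_enum. Qed.

End BitStrings.

Section OneMinMaxFront.
Variable n : nat.
Implicit Types x y z : bits n.

Lemma OneMinMax_sum x : (OneMinMax x).1 + (OneMinMax x).2 = n.
Proof. by have := nones_le x; rewrite /=; lia. Qed.

Lemma pareto_OneMinMax x : pareto (@OneMinMax n) x.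
Proof.
apply/forallP => y; rewrite /dominates.
by have := OneMinMax_sum x; have := OneMinMax_sum y; lia.
Qed.

Lemma OneMinMax_flip_down x : x != zeros n ->
  exists z, [/\ hamming_neighbour x z, pareto (@OneMinMax n) z &
                (OneMinMax z).1.+1 = (OneMinMax x).1].
Proof.
move=> /one_bit[p xp]; exists (flip x p).
rewrite hamming_neighbour_flip pareto_OneMinMax; split=> //=.
by have := nones_flip x p; rewrite xp /=; lia.
Qed.

Lemma OneMinMax_flip_up x : x != onesv n ->
  exists z, [/\ hamming_neighbour x z, pareto (@OneMinMax n) z &
                (OneMinMax z).1 = (OneMinMax x).1.+1].
Proof.
move=> /zero_bit[p /negbTE xp]; exists (flip x p).
rewrite hamming_neighbour_flip pareto_OneMinMax; split=> //=.
by have := nones_flip x p; rewrite xp /=; lia.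
Qed.

End OneMinMaxFront.

Section LOTZFront.
Variable n : nat.
Implicit Types x y z : bits n.

Definition stair l : bits n := [ffun j : 'I_n => j < l].

Lemma stair0 : stair 0 = zeros n.
Proof. by apply/ffunP => j; rewrite !ffunE. Qed.

Lemma stairn : stair n = onesv n.
Proof. by apply/ffunP => j; rewrite !ffunE ltn_ord. Qed.

Lemma bitseq_of_stair l : l <= n ->
  bitseq_of (stair l) = nseq l true ++ nseq (n - l) false.
Proof.
move=> le_ln; apply: (@eq_from_nth _ false).
  by rewrite size_bitseq_of size_cat !size_nseq; lia.
move=> i; rewrite size_bitseq_of => lt_in.
rewrite (nth_bitseq_of _ (Ordinal lt_in)) ffunE nth_cat size_nseq !nth_nseq /=.
by case: (i < l) => //; case: (_ < _).
Qed.

Lemma LO_stair l : l <= n -> LO (stair l) = l.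
Proof.
move=> le_ln; rewrite /LO bitseq_of_stair // find_cat has_nseq andbF size_nseq.
by case: (n - l) => [|k] /=; rewrite addn0.
Qed.

Lemma TZ_stair l : l <= n -> TZ (stair l) = n - l.
Proof.
move=> le_ln; rewrite /TZ bitseq_of_stair // rev_cat !rev_nseq find_cat.
by rewrite has_nseq andbF size_nseq; case: l {le_ln} => [|k] /=; rewrite addn0.
Qed.

Lemma nones_stair l : l <= n -> nones (stair l) = l.
Proof.
move=> le_ln; rewrite /nones (eq_bigr (fun i : 'I_n => nat_of_bool (i < l))) => [|i _];
  last by rewrite ffunE.
rewrite -(big_mkord xpredT (fun i => nat_of_bool (i < l))) (big_cat_nat _ le_ln) //=.
rewrite (eq_big_nat _ _ (F2 := fun _ => 1)) => [|i /andP[_ ->] //].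
rewrite [X in _ + X](eq_big_nat _ _ (F2 := fun _ => 0)) => [|i /andP[le_li _]];
  last by rewrite ltnNge le_li.
by rewrite !sum_nat_const_nat; lia.
Qed.

Lemma flip_stair_down l (p : 'I_n) : p.+1 = l -> flip (stair l) p = stair p.
Proof.
by move=> <-; apply/ffunP => j; rewrite !ffunE -val_eqE /= ltnS; case: (ltngtP j p).
Qed.

Lemma flip_stair_up l (p : 'I_n) : val p = l -> flip (stair l) p = stair l.+1.
Proof.
by move=> <-; apply/ffunP => j; rewrite !ffunE -val_eqE /= ltnS; case: (ltngtP j p).
Qed.

Lemma LO_le x : LO x <= n.
Proof. by rewrite -[X in _ <= X](size_bitseq_of x) find_size. Qed.

Lemma TZ_le x : TZ x <= n.
Proof. by rewrite -[X in _ <= X](size_bitseq_of x) -size_rev find_size. Qed.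

Lemma LO_ones x (i : 'I_n) : i < LO x -> x i.
Proof. by move/(before_find false); rewrite nth_bitseq_of => /negbFE. Qed.

Lemma TZ_zeros x (i : 'I_n) : n - TZ x <= i -> ~~ x i.
Proof.
have lt_in := ltn_ord i; move=> le_i.
have lt_k : n - i.+1 < TZ x by lia.
have := before_find false lt_k; rewrite nth_rev size_bitseq_of; last by lia.
have -> : n - (n - i.+1).+1 = i by lia.
by rewrite nth_bitseq_of => /= ->.
Qed.

Lemma LO_TZ_le x : LO x + TZ x <= n.
Proof.
rewrite leqNgt; apply/negP => lt_n.
have lt_in : n - TZ x < n by have := LO_le x; have := TZ_le x; lia.
have := @TZ_zeros x (Ordinal lt_in) (leqnn _).
by rewrite LO_ones // /=; have := TZ_le x; lia.
Qed.

Lemma stair_LO x : LO x + TZ x = n -> x = stair (LO x).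
Proof.
move=> sum_n; apply/ffunP => j; rewrite ffunE.
case: ltnP => [/LO_ones -> // | le_j].
by apply/negbTE/TZ_zeros; lia.
Qed.

Lemma LOTZ_stair l : l <= n -> LOTZ (stair l) = (l, n - l).
Proof. by move=> le_ln; rewrite /LOTZ LO_stair ?TZ_stair. Qed.

Lemma pareto_stair l : l <= n -> pareto (@LOTZ n) (stair l).
Proof.
move=> le_ln; apply/forallP => y; rewrite /dominates LOTZ_stair //=.
by have := LO_TZ_le y; lia.
Qed.

Lemma pareto_LOTZ_sum x : pareto (@LOTZ n) x -> LO x + TZ x = n.
Proof.
move/forallP/(_ (stair (LO x))); rewrite /dominates LOTZ_stair ?LO_le //=.
by have := LO_TZ_le x; lia.
Qed.

Lemma pareto_nones x : pareto (@LOTZ n) x -> nones x = LO x.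
Proof. by move/pareto_LOTZ_sum/stair_LO => {1}->; rewrite nones_stair ?LO_le. Qed.

Lemma LOTZ_neighbour_step y z : pareto (@LOTZ n) y -> pareto (@LOTZ n) z ->
  hamming_neighbour y z -> (LOTZ z).1.+1 = (LOTZ y).1 \/ (LOTZ z).1 = (LOTZ y).1.+1.
Proof. by move=> py pz /hamming_neighbour_nones; rewrite !pareto_nones. Qed.

Lemma LOTZ_flip_down x : pareto (@LOTZ n) x -> x != zeros n ->
  exists z, [/\ hamming_neighbour x z, pareto (@LOTZ n) z &
                (LOTZ z).1.+1 = (LOTZ x).1].
Proof.
move=> /pareto_LOTZ_sum/stair_LO x_stair nz.
have l_gt0 : 0 < LO x by rewrite lt0n; apply: contraNneq nz => l0; rewrite x_stair l0 stair0.
have lt_pn : (LO x).-1 < n by have := LO_le x; lia.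
have flip_x : flip x (Ordinal lt_pn) = stair (LO x).-1.
  by rewrite {1}x_stair flip_stair_down //= prednK.
exists (flip x (Ordinal lt_pn)); rewrite hamming_neighbour_flip flip_x.
by rewrite pareto_stair ?LOTZ_stair 1?ltnW //= prednK.
Qed.

Lemma LOTZ_flip_up x : pareto (@LOTZ n) x -> x != onesv n ->
  exists z, [/\ hamming_neighbour x z, pareto (@LOTZ n) z &
                (LOTZ z).1 = (LOTZ x).1.+1].
Proof.
move=> /pareto_LOTZ_sum/stair_LO x_stair no.
have lt_ln : LO x < n.
  by rewrite ltn_neqAle LO_le andbT; apply: contraNneq no => ln; rewrite x_stair ln stairn.
have flip_x : flip x (Ordinal lt_ln) = stair (LO x).+1 by rewrite {1}x_stair flip_stair_up.
exists (flip x (Ordinal lt_ln)); rewrite hamming_neighbour_flip flip_x.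
by rewrite pareto_stair ?LOTZ_stair.
Qed.

End LOTZFront.

Theorem lemma2 (n : nat) :
  diversity_favouring (@OneMinMax n) (fun x P => CDC (@OneMinMax n) P x) (@not_const n) /\
  diversity_favouring (@LOTZ n) (fun x P => CDC (@LOTZ n) P x) (@not_const n).
Proof.
split; apply: CDC_diversity_favouring.
- by move=> x; rewrite OneMinMax_sum.
- by move=> x _; rewrite OneMinMax_sum.
- by move=> y z _ _ /hamming_neighbour_nones.
- by move=> x _; apply: OneMinMax_flip_down.
- by move=> x _; apply: OneMinMax_flip_up.
- exact: LO_TZ_le.
- exact: pareto_LOTZ_sum.
- exact: LOTZ_neighbour_step.
- exact: LOTZ_flip_down.
- exact: LOTZ_flip_up.
Qed.
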